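(* Let $a,b\geq0$, $0\leq j\leq b$ and $n\geq b+1$ be integers. Then $\{H_{a+1+j}E_{b-j}\}_n$ equals the number of pairs $(\lambda,\mu)$ such that (1) $\lambda=(\lambda_1,\dotsc,\lambda_{b-j})$ with $\lambda_1\geq\cdots\geq\lambda_{b-j}\geq0$; (2) $\mu=(\mu_1,\dotsc,\mu_{n-b+j})$ with $\mu_1>\cdots>\mu_{n-b+j}\geq0$; (3) $\sum_i\lambda_i+\sum_i\mu_i=a+1+j$.
   Context: For $i\geq1$, $X_i(\sigma)$ is the number of $i$-cycles of $\sigma$. For a partition $\alpha=1^{a_1}2^{a_2}\cdots$ ($a_i$ = number of parts equal to $i$, $|\alpha|=\sum ia_i$, $l(\alpha)=\sum a_i$) let $\binom X\alpha=\prod_i\binom{X_i}{a_i}$ and $\left(\!\binom X\alpha\!\right)=\prod_i\binom{X_i+a_i-1}{a_i}$. Define $H_k=\sum_{\alpha\vdash k}\left(\!\binom X\alpha\!\right)$ and $E_l=\sum_{\alpha\vdash l}(-1)^{|\alpha|-l(\alpha)}\binom X\alpha$ ($H_0=E_0=1$). The signed moment of $p\in\mathbb C[X_1,X_2,\dotsc]$ is $\{p\}_n=\frac1{n!}\sum_{\sigma\in S_n}\mathrm{sgn}(\sigma)p(X_1(\sigma),X_2(\sigma),\dotsc)$. *)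

From mathcomp Require Import all_boot all_order all_algebra all_fingroup.
Set Implicit Arguments. Unset Strict Implicit. Unset Printing Implicit Defensive.
Import GRing.Theory Num.Theory.
Local Open Scope ring_scope.

Definition cyc_count (n : nat) (s : {perm 'I_n}) : nat -> nat :=
  fun i => #|[set C in porbits s | #|C| == i]|.

(* Partitions alpha of k, encoded by multiplicity vectors a (a_i = number of
   parts equal to i, 1 <= i <= k; a_0 = 0), so that |alpha| = sum_i i a_i = k. *)
Definition is_part (k : nat) (a : {ffun 'I_k.+1 -> 'I_k.+1}) : bool :=
  (val (a ord0) == 0%N) && (\sum_(i < k.+1) i * a i == k)%N.

Definition part_len (k : nat) (a : {ffun 'I_k.+1 -> 'I_k.+1}) : nat :=
  (\sum_(i < k.+1) a i)%N.

(* H_k = sum_{alpha |- k} prod_i ((X_i multichoose a_i)) = prod_i C(X_i+a_i-1, a_i) *)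
Definition Hpoly (k : nat) (X : nat -> nat) : rat :=
  \sum_(a : {ffun 'I_k.+1 -> 'I_k.+1} | is_part a)
     \prod_(i < k.+1) ('C(X i + a i - 1, a i))%:R.

Definition Epoly (l : nat) (X : nat -> nat) : rat :=
  \sum_(a : {ffun 'I_l.+1 -> 'I_l.+1} | is_part a)
     (-1) ^+ (l - part_len a)%N * \prod_(i < l.+1) ('C(X i, a i))%:R.

Definition smoment (n : nat) (p : (nat -> nat) -> rat) : rat :=
  (n`!%:R)^-1 * \sum_(s : {perm 'I_n}) (-1) ^+ odd_perm s * p (cyc_count s).

(* Entries are
   automatically <= N, so they are taken in 'I_N.+1 without loss. *)
Definition pair_count (m r N : nat) : nat :=
  #|[set p : (m.-tuple 'I_N.+1 * r.-tuple 'I_N.+1) |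
      [&& sorted geq (map val p.1), sorted gtn (map val p.2) &
          (sumn (map val p.1) + sumn (map val p.2) == N)%N]]|.

From mathcomp Require Import all_boot all_order all_algebra all_fingroup zify.
Set Implicit Arguments.
Unset Strict Implicit.
Unset Printing Implicit Defensive.
Import GRing.Theory Num.Theory.
Local Open Scope ring_scope.

(* H_N and E_m are coefficients of products over the cycle type:
   H_N(X) = [t^N] prod_i (1 - t^i)^(-X_i) and E_m(X) = [t^m] prod_i (1 - (-t)^i)^(X_i).
   For X = X(s) these become products over the cycles of s, so H_N(X(s)) counts the
   s-invariant maps f : [n] -> N of total N, and E_m(X(s)) sums (-1)^(m + #cycles in S)
   over the s-stable m-subsets S.  Exchanging sums, n! {H_N E_m}_n is the sum over the
   pairs (f, S) of the signs of the permutations fixing (f, S).  If f takes the same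
   value at two points outside S, multiplying by their transposition pairs off the
   stabiliser into elements of opposite signs; otherwise every stabiliser element fixes
   the complement of S pointwise and has total sign +1.  By Burnside's lemma what is
   left is the number of S_n-orbits of pairs (f, S) with |S| = m, total N and f
   injective off S, and such an orbit is determined by the multiset of values of f on S
   (the partition lambda) and the set of values off S (the strict partition mu). *)

Section TruncatedPowerSeries.
Context {R : comNzRingType}.
Implicit Types (p q : {poly R}) (N : nat).

Lemma coef_prod_sum_scaleXn (I J : finType) (c : I -> J -> R) (w : I -> J -> nat) N :
  (\prod_(i : I) \sum_(j : J) c i j *: 'X^(w i j))`_N =
  \sum_(g : {ffun I -> J} | (\sum_i w i (g i))%N == N) \prod_i c i (g i).
Proof.
rewrite bigA_distr_bigA coef_sum [RHS]big_mkcond /=; apply: eq_bigr => g _.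
have -> : \prod_i (c i (g i) *: 'X^(w i (g i))) =
          (\prod_i c i (g i)) *: 'X^(\sum_i w i (g i)) :> {poly R}.
  elim/big_rec3: _ => [|i s p x _ ->]; first by rewrite expr0 scale1r.
  by rewrite -scalerAl -scalerAr scalerA exprD.
by rewrite coefZ coefXn eq_sym; case: eqP => _; rewrite ?mulr1 ?mulr0.
Qed.

Lemma poly_comp_Xn (K i : nat) (d : nat -> R) :
  (\poly_(k < K) d k) \Po 'X^i = \sum_(k < K) d k *: 'X^(i * k).
Proof.
rewrite poly_def -[LHS]/(comp_poly 'X^i _) raddf_sum /=; apply: eq_bigr => k _.
by rewrite comp_polyZ comp_Xn_poly -exprM.
Qed.

Definition eq_upto N p q := forall k, (k <= N)%N -> p`_k = q`_k.

Lemma eq_upto_sym N p q : eq_upto N p q -> eq_upto N q p.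
Proof. by move=> h k hk; rewrite h. Qed.

Lemma eq_upto_trans N p q r : eq_upto N p q -> eq_upto N q r -> eq_upto N p r.
Proof. by move=> h1 h2 k hk; rewrite h1 ?h2. Qed.

Lemma eq_uptoM N p1 q1 p2 q2 :
  eq_upto N p1 q1 -> eq_upto N p2 q2 -> eq_upto N (p1 * p2) (q1 * q2).
Proof.
move=> h1 h2 k hk; rewrite !coefM; apply: eq_bigr => j _.
by rewrite h1 ?h2 ?(leq_trans (leq_subr _ _) hk) // (leq_trans _ hk) // -ltnS.
Qed.

Lemma eq_upto_prod N (I : Type) (r : seq I) (P : pred I) (F G : I -> {poly R}) :
  (forall i, P i -> eq_upto N (F i) (G i)) ->
  eq_upto N (\prod_(i <- r | P i) F i) (\prod_(i <- r | P i) G i).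
Proof. by move=> h; apply: (big_ind2 (eq_upto N)) => //; apply: eq_uptoM. Qed.

Lemma eq_upto_comp_Xn N p q i :
  (0 < i)%N -> eq_upto N p q -> eq_upto N (p \Po 'X^i) (q \Po 'X^i).
Proof.
move=> i0 h k hk; rewrite !coef_comp_poly_Xn //; case: ifP => // _.
by rewrite h // (leq_trans (leq_div _ _) hk).
Qed.

Lemma eq_upto_prod_ord_tail N (P : pred nat) (U : nat -> {poly R}) L K :
  (forall i, (L <= i)%N -> P i -> eq_upto N (U i) 1) -> (L <= K)%N ->
  eq_upto N (\prod_(i < K | P i) U i) (\prod_(i < L | P i) U i).
Proof.
move=> hU hLK; rewrite -!(big_mkord P) (big_cat_nat (leq0n L) hLK) /=.
rewrite -[X in eq_upto _ _ X]mulr1; apply: eq_uptoM => //.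
apply: (eq_upto_trans (q := \prod_(L <= i < K | P i) 1)); last by rewrite big1_eq.
rewrite big_nat_cond [X in eq_upto _ _ X]big_nat_cond.
by apply: eq_upto_prod => i /andP[/andP[hi _] hP]; apply: hU.
Qed.


Lemma hockey_stick (x k : nat) : (\sum_(j < k.+1) 'C(x + j - 1, j) = 'C(x + k, k))%N.
Proof.
elim: k => [|k IH]; first by rewrite big_ord1 !bin0.
by rewrite big_ord_recr /= IH addnS subn1 /= [in RHS]binS addnC.
Qed.

Definition geom_trunc N : {poly R} := \poly_(k < N.+1) 1.

Lemma eq_upto_geom_trunc_exp N x :
  eq_upto N (geom_trunc N ^+ x) (\poly_(k < N.+1) ('C(x + k - 1, k))%:R).
Proof.
elim: x => [|x IH] k hk.
  rewrite expr0 coef1 coef_poly ltnS hk add0n.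
  by case: k {hk} => [|k] //=; rewrite subn1 /= bin_small.
rewrite exprS (eq_uptoM (p1 := geom_trunc N) (fun _ _ => erefl) IH) //.
rewrite coefM coef_poly ltnS hk.
rewrite (eq_bigr (fun j : 'I_k.+1 => ('C(x + (k - j) - 1, k - j))%:R)); last first.
  move=> j _; have hj : (j <= N)%N by rewrite (leq_trans _ hk) // -ltnS.
  by rewrite !coef_poly !ltnS hj (leq_trans (leq_subr _ _) hk) mul1r.
rewrite -natr_sum (reindex_inj rev_ord_inj) /=.
rewrite (eq_bigr (fun j : 'I_k.+1 => 'C(x + j - 1, j))); last first.
  by move=> j _; rewrite subKn // -ltnS.
by rewrite hockey_stick addSn subn1.
Qed.

Lemma coef_1DZX_exp (c : R) x k : ((1 + c *: 'X) ^+ x)`_k = c ^+ k * ('C(x, k))%:R.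
Proof.
elim: x k => [|x IH] k.
  by rewrite expr0 coef1; case: k => [|k]; rewrite ?expr0 ?mulr1 ?bin0 // bin0n mulr0.
rewrite exprS mulrDl mul1r coefD -scalerAl coefZ coefXM IH.
case: k => [|k] /=; first by rewrite !bin0 mulr0 addr0.
by rewrite IH binS natrD mulrDr exprS mulrA addrC.
Qed.


Lemma coef_prod_poly_comp_Xn N (D : nat -> nat -> R) : (forall i, D i 0%N = 1) ->
  (\prod_(i < N.+1 | (0 < i)%N) ((\poly_(k < N.+1) D i k) \Po 'X^i))`_N =
  \sum_(a : {ffun 'I_N.+1 -> 'I_N.+1} | is_part a) \prod_(i < N.+1) D i (a i).
Proof.
move=> hD.
pose c (i k : 'I_N.+1) := if i == 0%N :> nat then ((k == 0%N :> nat)%:R : R) else D i k.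
have -> : \prod_(i < N.+1 | (0 < i)%N) ((\poly_(k < N.+1) D i k) \Po 'X^i) =
          \prod_(i < N.+1) \sum_(k < N.+1) c i k *: 'X^(i * k).
  rewrite big_mkcond; apply: eq_bigr => i _; rewrite /c lt0n.
  case: eqP => [i0 | _]; last by rewrite poly_comp_Xn.
  rewrite (bigD1 ord0) //= big1 ?addr0 ?scale1r ?i0 ?expr0 // => k /negbTE.
  by rewrite -val_eqE /= => ->; rewrite scale0r.
rewrite coef_prod_sum_scaleXn [RHS]big_mkcond [LHS]big_mkcond; apply: eq_bigr => a _.
rewrite /is_part; case: eqP => _; rewrite ?andbT ?andbF //.
case: ifP => [/eqP a0 | /negbT a0]; last by rewrite (bigD1 ord0) //= /c eqxx (negbTE a0) mul0r.
apply: eq_bigr => i _; rewrite /c; case: eqP => // i0.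
have -> : i = ord0 by apply: val_inj.
by rewrite a0 /= hD.
Qed.

Lemma eq_upto_prod_comp_Xn_exp N n (X : nat -> nat) (phi : nat -> {poly R})
    (D : nat -> nat -> R) :
  X 0%N = 0%N -> (forall i, (n < i)%N -> X i = 0%N) -> (forall i, D i 0%N = 1) ->
  (forall i, eq_upto N (phi i ^+ X i) (\poly_(k < N.+1) D i k)) ->
  eq_upto N (\prod_(i < n.+1) (phi i \Po 'X^i) ^+ X i)
            (\prod_(i < N.+1 | (0 < i)%N) ((\poly_(k < N.+1) D i k) \Po 'X^i)).
Proof.
move=> X0 Xn hD hphi; pose U i := (\poly_(k < N.+1) D i k) \Po 'X^i.
have U1 i : (minn n.+1 N.+1 <= i)%N -> (0 < i)%N -> eq_upto N (U i) 1.
  rewrite geq_min => /orP[hi | hi] i0.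
    have := eq_upto_comp_Xn i0 (eq_upto_sym (hphi i)).
    by rewrite Xn // expr0 -polyC1 comp_polyC.
  move=> k hk; rewrite coef_comp_poly_Xn // coef1.
  case: k hk => [|k] hk; first by rewrite dvdn0 div0n coef_poly hD.
  have /negbTE -> // : ~~ (i %| k.+1)%N.
  by apply: contraL hk => /(dvdn_leq (ltn0Sn k)) hik; rewrite -ltnNge (leq_trans hi hik).
apply: (eq_upto_trans (q := \prod_(i < n.+1 | (0 < i)%N) U i)).
  rewrite [X in eq_upto _ _ X]big_mkcond; apply: eq_upto_prod => i _.
  case: (posnP i) => [-> | i0]; first by rewrite X0 expr0.
  rewrite -[_ ^+ _]/(comp_poly 'X^i (phi i) ^+ X i) -rmorphXn /=.
  exact: eq_upto_comp_Xn.
apply: eq_upto_trans (eq_upto_prod_ord_tail U1 (geq_minl _ _)) _.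
exact: eq_upto_sym (eq_upto_prod_ord_tail U1 (geq_minr _ _)).
Qed.

End TruncatedPowerSeries.

Lemma Hpoly_coef_prod N n (X : nat -> nat) :
  X 0%N = 0%N -> (forall i, (n < i)%N -> X i = 0%N) ->
  Hpoly N X = (\prod_(i < n.+1) (geom_trunc N \Po 'X^i) ^+ X i)`_N.
Proof.
move=> X0 Xn; pose D i k : rat := ('C(X i + k - 1, k))%:R.
have hD i : D i 0%N = 1 by rewrite /D bin0.
rewrite (eq_upto_prod_comp_Xn_exp (N := N) (phi := fun=> geom_trunc N) X0 Xn hD) //.
  by rewrite coef_prod_poly_comp_Xn.
by move=> i; apply: eq_upto_geom_trunc_exp.
Qed.

Definition Efactor (i : nat) : {poly rat} := 1 + (-1) ^+ i.+1 *: 'X.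

Lemma prod_sign_part N (a : {ffun 'I_N.+1 -> 'I_N.+1}) : is_part a ->
  \prod_(i < N.+1) ((-1) ^+ i.+1) ^+ a i = (-1) ^+ (N - part_len a) :> rat.
Proof.
case/andP=> /eqP a0 /eqP asum.
have hl : (part_len a <= N)%N.
  rewrite -[X in (_ <= X)%N]asum; apply: leq_sum => i _.
  case: (posnP i) => [i0 | /leq_pmull //].
  have -> : i = ord0 by apply: val_inj.
  by rewrite a0.
rewrite (eq_bigr (fun i : 'I_N.+1 => (-1) ^+ (i.+1 * a i)%N)) => [|i _]; last by rewrite exprM.
rewrite prodrXr -signr_odd -[RHS]signr_odd oddB //.
have -> : (\sum_(i < N.+1) i.+1 * a i = N + part_len a)%N.
  by rewrite -[X in (X + _)%N]asum -big_split; apply: eq_bigr => i _; rewrite mulSn addnC.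
by rewrite oddD.
Qed.

Lemma Epoly_coef_prod N n (X : nat -> nat) :
  X 0%N = 0%N -> (forall i, (n < i)%N -> X i = 0%N) ->
  Epoly N X = (\prod_(i < n.+1) (Efactor i \Po 'X^i) ^+ X i)`_N.
Proof.
move=> X0 Xn; pose D i k : rat := ((-1) ^+ i.+1) ^+ k * ('C(X i, k))%:R.
have hD i : D i 0%N = 1 by rewrite /D expr0 bin0 mul1r.
rewrite (eq_upto_prod_comp_Xn_exp (N := N) (phi := Efactor) X0 Xn hD) //.
  rewrite coef_prod_poly_comp_Xn //; apply: eq_bigr => a ha.
  by rewrite big_split /= prod_sign_part.
by move=> i k hk; rewrite coef_1DZX_exp coef_poly ltnS hk.
Qed.

Section PermCycles.
Variables (T : finType) (s : {perm T}).

Lemma porbit_in_porbits x : porbit s x \in porbits s.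
Proof. exact: imset_f. Qed.

Definition pcycle := {C in porbits s}.

Definition pcycle_of x : pcycle := Sub (porbit s x) (porbit_in_porbits x).

Lemma pcycleP (C : pcycle) : exists y, val C == porbit s y.
Proof. by case: C => C /= /imsetP[y _ ->]; exists y. Qed.

Definition pcycle_rep (C : pcycle) : T := xchoose (pcycleP C).

Lemma pcycle_repE C : val C = porbit s (pcycle_rep C).
Proof. exact/eqP/(xchooseP (pcycleP C)). Qed.

Lemma pcycle_of_rep C : pcycle_of (pcycle_rep C) = C.
Proof. by apply: val_inj; rewrite /= -pcycle_repE. Qed.

Lemma mem_pcycle (C : pcycle) x : (x \in val C) = (pcycle_of x == C).
Proof. by rewrite -val_eqE /= pcycle_repE eq_porbit_mem. Qed.

Lemma pcycle_of_perm x : pcycle_of (s x) = pcycle_of x.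
Proof. by apply: val_inj => /=; have := porbit_perm s 1 x; rewrite expg1. Qed.

Lemma pcycle_rep_invariant (Y : Type) (F : T -> Y) :
  (forall x, F (s x) = F x) -> forall x, F (pcycle_rep (pcycle_of x)) = F x.
Proof.
move=> hF x; have : pcycle_rep (pcycle_of x) \in porbit s x.
  by rewrite -eq_porbit_mem -pcycle_repE.
case/porbitP=> i ->; elim: i => [|i IH]; first by rewrite expg0 perm1.
by rewrite expgSr permM hF.
Qed.

Lemma sum_pcycle_of (F : pcycle -> nat) :
  (\sum_x F (pcycle_of x) = \sum_(C : pcycle) #|val C| * F C)%N.
Proof.
rewrite (partition_big pcycle_of xpredT) //=; apply: eq_bigr => C _.
rewrite (eq_bigr (fun=> F C)) => [|x /eqP -> //].
by rewrite sum_nat_const; congr (_ * _)%N; apply: eq_card => x; rewrite /= mem_pcycle.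
Qed.

Lemma prod_pcycle_card (R : comNzRingType) (h : nat -> R) K : (#|T| <= K)%N ->
  \prod_(C : pcycle) h #|val C| =
  \prod_(i < K.+1) h i ^+ #|[set C in porbits s | #|C| == i]|.
Proof.
move=> hK; rewrite (partition_big (fun C : pcycle => (inord #|val C| : 'I_K.+1)) xpredT) //=.
apply: eq_bigr => i _.
have hC (C : pcycle) : ((inord #|val C| : 'I_K.+1) == i) = (#|val C| == i).
  by rewrite -val_eqE /= inordK // ltnS (leq_trans (max_card _) hK).
rewrite (eq_bigl _ _ hC) (eq_bigr (fun=> h i)) => [|C /eqP -> //].
rewrite prodr_const; congr (_ ^+ _).
rewrite -(card_imset _ val_inj); apply: eq_card => C.
apply/imsetP/idP => [[D hD ->] | ]; first by rewrite inE (valP D).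
by rewrite inE => /andP[hCin hCi]; exists (Sub C hCin).
Qed.

Definition pcycle_ffun {Y : finType} (g : {ffun pcycle -> Y}) : {ffun T -> Y} :=
  [ffun x => g (pcycle_of x)].

Lemma pcycle_ffun_inj (Y : finType) : injective (@pcycle_ffun Y).
Proof.
move=> g1 g2 e; apply/ffunP => C; rewrite -(pcycle_of_rep C).
by have := congr1 (fun f : {ffun T -> Y} => f (pcycle_rep C)) e; rewrite !ffunE.
Qed.

Lemma card_invariant_ffun N :
  (#|[set f : {ffun T -> 'I_N.+1} | ((\sum_x f x)%N == N) && [forall x, f (s x) == f x]]|)%:R
  = (\prod_(C : pcycle) (geom_trunc N \Po 'X^#|val C|))`_N :> rat.
Proof.
rewrite (eq_bigr (fun C : pcycle => \sum_(k < N.+1) 1 *: 'X^(#|val C| * k))); last first.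
  by move=> C _; rewrite /geom_trunc poly_comp_Xn.
rewrite coef_prod_sum_scaleXn (eq_bigr (fun=> 1 : rat)) => [|g _]; last exact: big1_eq.
rewrite sumr_const.
have -> : [set f : {ffun T -> 'I_N.+1} | ((\sum_x f x)%N == N) && [forall x, f (s x) == f x]] =
    pcycle_ffun @: [set g : {ffun pcycle -> 'I_N.+1} | (\sum_(C : pcycle) #|val C| * g C)%N == N].
  apply/setP => f; rewrite inE; apply/andP/imsetP => [[hsum /forallP hfix] | [g hg ->]].
    have hF x : f (s x) = f x by apply/eqP.
    exists [ffun C => f (pcycle_rep C)]; last first.
      by apply/ffunP => x; rewrite !ffunE (pcycle_rep_invariant hF).
    rewrite inE; apply/eqP; rewrite -[X in _ = X](eqP hsum).
    rewrite -(sum_pcycle_of (fun C => nat_of_ord ([ffun C => f (pcycle_rep C)] C))).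
    by apply: eq_bigr => x _; rewrite ffunE (pcycle_rep_invariant hF).
  split; last by apply/forallP => x; rewrite !ffunE pcycle_of_perm.
  rewrite inE in hg; rewrite -[X in _ == X](eqP hg) -(sum_pcycle_of (fun C => nat_of_ord (g C))).
  by apply/eqP/eq_bigr => x _; rewrite ffunE.
by rewrite (card_imset _ (@pcycle_ffun_inj _)) cardsE.
Qed.

Definition pcycle_set (g : {ffun pcycle -> bool}) : {set T} := [set x | g (pcycle_of x)].

Lemma pcycle_set_inj : injective pcycle_set.
Proof.
move=> g1 g2 e; apply/ffunP => C; rewrite -(pcycle_of_rep C).
by have := congr1 (fun S : {set T} => pcycle_rep C \in S) e; rewrite !inE.
Qed.

Lemma card_pcycle_set g : #|pcycle_set g| = (\sum_(C : pcycle) #|val C| * g C)%N.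
Proof.
rewrite -(sum_pcycle_of (fun C => nat_of_bool (g C))) -sum1_card big_mkcond /=.
by apply: eq_bigr => x _; rewrite inE; case: (g _).
Qed.

Lemma card_porbits_pcycle_set g : #|porbit s @: pcycle_set g| = (\sum_(C : pcycle) g C)%N.
Proof.
have -> : porbit s @: pcycle_set g = val @: [set C : pcycle | g C].
  apply/setP => D; apply/imsetP/imsetP => [[x] | [C]]; rewrite inE => hC ->.
    by exists (pcycle_of x); rewrite ?inE.
  by exists (pcycle_rep C); rewrite ?inE ?pcycle_of_rep // pcycle_repE.
rewrite (card_imset _ val_inj) -sum1_card big_mkcond /=.
by apply: eq_bigr => C _; rewrite inE; case: (g _).
Qed.

Lemma sum_invariant_set_sign m :
  \sum_(S : {set T} | (#|S| == m) && [forall x, (s x \in S) == (x \in S)])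
      (-1) ^+ (#|S| + #|porbit s @: S|)
  = (\prod_(C : pcycle) (Efactor #|val C| \Po 'X^#|val C|))`_m.
Proof.
rewrite (eq_bigr (fun C : pcycle => \sum_(b : bool)
    (if b then (-1) ^+ #|val C|.+1 else 1) *: 'X^(#|val C| * b))); last first.
  move=> C _; rewrite big_bool /= /Efactor comp_polyD comp_polyZ comp_polyX -polyC1 comp_polyC.
  by rewrite muln1 muln0 expr0 scale1r polyC1 addrC.
rewrite coef_prod_sum_scaleXn.
set G := [set g : {ffun pcycle -> bool} | (\sum_(C : pcycle) #|val C| * g C)%N == m].
have e : [set S : {set T} | (#|S| == m) && [forall x, (s x \in S) == (x \in S)]] = pcycle_set @: G.
  apply/setP => S; rewrite inE; apply/andP/imsetP => [[hS /forallP hinv] | [g hg ->]].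
    have hF x : (s x \in S) = (x \in S) by apply/eqP.
    have eS : pcycle_set [ffun C => pcycle_rep C \in S] = S.
      by apply/setP => x; rewrite inE ffunE; apply: (pcycle_rep_invariant hF).
    by exists [ffun C => pcycle_rep C \in S]; rewrite // inE -card_pcycle_set eS.
  rewrite inE -card_pcycle_set in hg; split => //.
  by apply/forallP => x; rewrite !inE pcycle_of_perm.
rewrite (eq_bigl (fun S => S \in pcycle_set @: G)) => [|S]; last by rewrite -e inE.
rewrite (big_imset _ (in2W pcycle_set_inj)); apply: eq_big => [g | g _]; first by rewrite inE.
rewrite card_pcycle_set card_porbits_pcycle_set -big_split -prodrXr.
by apply: eq_bigr => C _; case: (g C); rewrite /= ?muln1 ?addn1 ?muln0 ?expr0.
Qed.

End PermCycles.

Lemma cyc_count0 n (s : {perm 'I_n}) : cyc_count s 0 = 0%N.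
Proof.
apply/eqP; rewrite cards_eq0; apply/eqP/setP => C; rewrite !inE.
by apply/negbTE; apply/andP => -[/imsetP[x _ ->]]; apply/negP/card_porbit_neq0.
Qed.

Lemma cyc_count_gt n (s : {perm 'I_n}) i : (n < i)%N -> cyc_count s i = 0%N.
Proof.
move=> hi; apply/eqP; rewrite cards_eq0; apply/eqP/setP => C; rewrite !inE.
apply/negbTE/negP => /andP[_ /eqP hC].
by have := max_card (mem C); rewrite card_ord hC leqNgt hi.
Qed.

Lemma Hpoly_cyc_count n (s : {perm 'I_n}) N : Hpoly N (cyc_count s) =
  (#|[set f : {ffun 'I_n -> 'I_N.+1} | ((\sum_x f x)%N == N) && [forall x, f (s x) == f x]]|)%:R.
Proof.
rewrite card_invariant_ffun (prod_pcycle_card s (fun i => geom_trunc N \Po 'X^i) (K := n)).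
  by rewrite (@Hpoly_coef_prod N n) ?cyc_count0 //; apply: cyc_count_gt.
by rewrite card_ord.
Qed.

Lemma Epoly_cyc_count n (s : {perm 'I_n}) m : Epoly m (cyc_count s) =
  \sum_(S : {set 'I_n} | (#|S| == m) && [forall x, (s x \in S) == (x \in S)])
      (-1) ^+ (#|S| + #|porbit s @: S|).
Proof.
rewrite sum_invariant_set_sign (prod_pcycle_card s (fun i => Efactor i \Po 'X^i) (K := n)).
  by rewrite (@Epoly_coef_prod m n) ?cyc_count0 //; apply: cyc_count_gt.
by rewrite card_ord.
Qed.

Section SignCancellation.
Variable T : finType.
Implicit Types (s t : {perm T}) (S : {set T}).

Lemma card_porbits_fix_setC s S : (forall w, w \notin S -> s w = w) ->
  #|porbits s| = (#|porbit s @: S| + #|~: S|)%N.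
Proof.
move=> fixC.
have orb1 w : w \notin S -> porbit s w = [set w].
  move=> hw; apply/setP => y; rewrite inE; apply/porbitP/eqP => [[i ->]|->].
    by rewrite permX_fix // fixC.
  by exists 0%N; rewrite expg0 perm1.
have -> : porbits s = porbit s @: S :|: porbit s @: ~: S.
  apply/setP => C; rewrite inE; apply/imsetP/orP => [[w _ ->] | [] /imsetP[w _ ->]]; last 2 first.
  - by exists w.
  - by exists w.
  by case: (boolP (w \in S)) => hw; [left | right]; apply/imsetP; exists w; rewrite ?inE.
rewrite cardsU (@eq_in_imset _ _ _ (fun w => [set w]) (~: S)) => [|w]; last first.
  by rewrite inE; apply: orb1.
rewrite (card_imset _ set1_inj).
suff -> : porbit s @: S :&: [set [set w] | w in ~: S] = set0 by rewrite cards0 subn0.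
apply/setP => C; rewrite !inE; apply/negbTE/andP => -[/imsetP[z hz ->] /imsetP[w hw e]].
have := porbit_id s z; rewrite e inE => /eqP ezw.
by move: hw; rewrite inE -ezw hz.
Qed.

Lemma porbit_eq_on s t S z : {in S, forall w, s w \in S} -> {in S, t =1 s} ->
  z \in S -> porbit t z = porbit s z.
Proof.
move=> sS ts zS.
have it i : (t ^+ i)%g z = (s ^+ i)%g z /\ (s ^+ i)%g z \in S.
  elim: i => [|i [IH1 IH2]]; first by rewrite !expg0 !perm1.
  by rewrite !expgSr !permM IH1 ts // sS.
by apply/setP => y; apply/porbitP/porbitP => -[i ->]; exists i; rewrite (it i).1.
Qed.

Definition stab_sign s S : rat :=
  (-1) ^+ odd_perm s * (-1) ^+ (#|S| + #|porbit s @: S|).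

Lemma stab_sign_fix_setC s S : (forall w, w \notin S -> s w = w) -> stab_sign s S = 1.
Proof.
move=> fixC; rewrite /stab_sign /odd_perm (card_porbits_fix_setC fixC) -(cardsC S).
rewrite signr_addb !signr_odd -!exprD -signr_odd.
set a := #|S|; set b := #|~: S|; set c := #|porbit s @: S|.
have -> : (a + b + (c + b) + (a + c) = (a + b + c).*2)%N by lia.
by rewrite odd_double.
Qed.

Lemma stab_sign_tpermM u v s S : u \notin S -> v \notin S -> u != v ->
  {in S, forall w, s w \in S} -> stab_sign (tperm u v * s) S = - stab_sign s S.
Proof.
move=> hu hv huv sS.
have agree : {in S, (tperm u v * s)%g =1 s}.
  move=> w hw; rewrite permM tpermD //.
  - by apply: contraNneq hu => ->.
  - by apply: contraNneq hv => ->.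
have e : porbit (tperm u v * s) @: S = porbit s @: S.
  by apply: eq_in_imset => w hw; apply: porbit_eq_on sS agree hw.
by rewrite /stab_sign e odd_permM odd_tperm huv signr_addb expr1 mulN1r mulNr.
Qed.

End SignCancellation.

Section ConfigAction.
Variables (T : finType) (N m : nat).

Definition config := ({ffun T -> 'I_N.+1} * {set T})%type.
Implicit Types (x : config) (s : {perm T}).

Definition config_act x s : config :=
  ([ffun u => x.1 ((s^-1)%g u)], [set u | (s^-1)%g u \in x.2]).

Lemma config_act1 : config_act^~ 1%g =1 id.
Proof.
move=> [f S]; rewrite /config_act /= invg1; congr pair.
  by apply/ffunP => u; rewrite ffunE perm1.
by apply/setP => u; rewrite inE perm1.
Qed.

Lemma config_actM x : act_morph config_act x.
Proof.
move=> s t; case: x => f S; rewrite /config_act /= invMg; congr pair.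
  by apply/ffunP => u; rewrite !ffunE permM.
by apply/setP => u; rewrite !inE permM.
Qed.

Definition config_action := TotalAction config_act1 config_actM.

Lemma config_actK x s : config_act (config_act x s) (s^-1)%g = x.
Proof. by rewrite -config_actM mulgV config_act1. Qed.

Lemma config_act_fixE x s : (config_act x s == x) =
  [forall u, x.1 (s u) == x.1 u] && [forall u, (s u \in x.2) == (u \in x.2)].
Proof.
case: x => f S /=; apply/eqP/andP => [e | [/forallP h1 /forallP h2]].
  have e1 := congr1 fst e; have e2 := congr1 snd e; rewrite /= in e1 e2.
  split; apply/forallP => u; first by rewrite -{1}e1 ffunE permK.
  by rewrite -{1}e2 inE permK.
rewrite /config_act /=; congr pair.
  by apply/ffunP => w; rewrite ffunE; have := h1 ((s^-1)%g w); rewrite permKV => /eqP.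
by apply/setP => w; rewrite inE; have := h2 ((s^-1)%g w); rewrite permKV => /eqP.
Qed.

Definition inj_off x := [forall u, forall v,
  [&& u \notin x.2, v \notin x.2 & x.1 u == x.1 v] ==> (u == v)].

Lemma sum_stab_sign x :
  \sum_(s | config_act x s == x) stab_sign s x.2 =
  if inj_off x then (#|[set s | config_act x s == x]|)%:R else 0.
Proof.
case: x => f S /=; case: ifP => hinj.
  rewrite -sum1_card natr_sum; apply: eq_big => [s | s]; first by rewrite inE.
  rewrite config_act_fixE /= => /andP[/forallP hf /forallP hS].
  apply: stab_sign_fix_setC => w hw; have /forallP/(_ (s w))/forallP/(_ w) := hinj.
  by rewrite (eqP (hS w)) hw (eqP (hf w)) eqxx /= => /eqP.
move/negbT: hinj => /forallPn[u /forallPn[v]].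
rewrite negb_imply => /andP[/and3P[hu hv /eqP huv] hne].
have ht : config_act (f, S) (tperm u v) = (f, S).
  apply/eqP; rewrite config_act_fixE /=; apply/andP; split; apply/forallP => w.
    by case: tpermP => [->|->|_ _] //; rewrite huv.
  by case: tpermP => [->|->|_ _] //; rewrite (negbTE hu) (negbTE hv).
set L := \sum_(s | _) _.
suff : L = - L by move/eqP; rewrite -subr_eq0 opprK -mulr2n mulrn_eq0 => /eqP.
rewrite {1}/L (reindex_inj (mulgI (tperm u v))) /= -sumrN.
apply: eq_big => [s | s]; rewrite config_actM ht //.
rewrite config_act_fixE /= => /andP[_ /forallP hS].
by apply: stab_sign_tpermM => // w hw; have := hS w; rewrite hw => /eqP.
Qed.

Definition shaped x := ((\sum_u x.1 u)%N == N) && (#|x.2| == m).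

Definition good_configs := [set x | shaped x && inj_off x].

Lemma sum_config_act x s : (\sum_u (config_act x s).1 u)%N = (\sum_u x.1 u)%N.
Proof.
rewrite (reindex_inj (@perm_inj _ s)) /=; apply: eq_bigr => u _.
by rewrite ffunE permK.
Qed.

Lemma card_config_act x s : #|(config_act x s).2| = #|x.2|.
Proof.
have -> : (config_act x s).2 = s @: x.2.
  apply/setP => u; rewrite inE; apply/idP/imsetP => [h | [w hw ->]]; last by rewrite permK.
  by exists ((s^-1)%g u); rewrite ?permKV.
by rewrite card_imset //; apply: perm_inj.
Qed.

Lemma inj_off_act x s : inj_off x -> inj_off (config_act x s).
Proof.
case: x => f S /= /forallP h; apply/forallP => u; apply/forallP => v; rewrite !inE !ffunE.
apply/implyP => /and3P[hu hv e].
have /forallP/(_ ((s^-1)%g v)) := h ((s^-1)%g u).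
by rewrite hu hv e /= => /eqP/perm_inj ->.
Qed.

Lemma acts_good_configs : [acts [set: {perm T}], on good_configs | config_action].
Proof.
apply/actsP => s _ x; rewrite !inE /shaped /= sum_config_act card_config_act.
congr (_ && _); apply/idP/idP; last exact: inj_off_act.
by rewrite -{2}(config_actK x s); apply: inj_off_act.
Qed.

End ConfigAction.

Lemma sum_card_stab (T : finType) (N m : nat) :
  (\sum_(x in good_configs T N m) #|[set s | config_act x s == x]|)%N =
  (\sum_(s in [set: {perm T}]) #|('Fix_(good_configs T N m | config_action T N)[s])%g|)%N.
Proof.
rewrite (eq_bigr (fun x => \sum_(s | config_act x s == x) 1)%N) => [|x _]; last first.
  by rewrite -sum1_card; apply: eq_bigl => s; rewrite inE.
rewrite (exchange_big_dep xpredT) //=; apply: eq_big => [s | s _]; first by rewrite inE.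
rewrite -sum1_card; apply: eq_bigl => x; rewrite !inE; congr andb.
by rewrite sub1set inE.
Qed.

Section SignedMoment.
Variables (n N m : nat).

Lemma sign_Hpoly_Epoly_cyc_count (s : {perm 'I_n}) :
  (-1) ^+ odd_perm s * (Hpoly N (cyc_count s) * Epoly m (cyc_count s)) =
  \sum_(x : config 'I_n N | shaped m x && (config_act x s == x)) stab_sign s x.2.
Proof.
rewrite Hpoly_cyc_count Epoly_cyc_count -sum1_card natr_sum big_distrl /=.
under eq_bigr do rewrite mul1r.
rewrite pair_big_dep /= mulr_sumr; apply: eq_big => [[f S] | [f S] _] //=.
rewrite /shaped config_act_fixE /= inE.
by case: (_ == N) => //=; case: (#|S| == m); rewrite /= ?andbF.
Qed.

Lemma smoment_HE_card_orbits :
  smoment n (fun X => Hpoly N X * Epoly m X) =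
  (#|orbit (config_action 'I_n N) [set: {perm 'I_n}] @: good_configs 'I_n N m|)%:R.
Proof.
rewrite /smoment (eq_bigr _ (fun s _ => sign_Hpoly_Epoly_cyc_count s)).
rewrite (exchange_big_dep (shaped m)) /=; last by move=> s x _ /andP[].
rewrite (eq_bigr (fun x => \sum_(s | config_act x s == x) stab_sign s x.2)) => [|x hx]; last first.
  by apply: eq_bigl => s; rewrite hx.
rewrite (eq_bigr _ (fun x _ => sum_stab_sign x)).
have -> : \sum_(x : config 'I_n N | shaped m x)
      (if inj_off x then (#|[set s | config_act x s == x]|)%:R else 0) =
    ((\sum_(x in good_configs 'I_n N m) #|[set s | config_act x s == x]|)%N)%:R :> rat.
  rewrite natr_sum big_mkcond [RHS]big_mkcond /=; apply: eq_bigr => x _.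
  by rewrite inE; case: (shaped m x); case: (inj_off x).
rewrite sum_card_stab Frobenius_Cauchy; last exact: acts_good_configs.
by rewrite cardsT card_Sn natrM mulrC mulfK // pnatr_eq0 -lt0n fact_gt0.
Qed.

End SignedMoment.

(* Marked keys come first and values decrease within each block, so the sorted
   keys of a configuration (f, S) list lambda (the values on S), then mu. *)
Definition key_le {N : nat} : rel (bool * 'I_N.+1) :=
  fun p q => if p.1 == q.1 then (q.2 <= p.2)%N else p.1.

Lemma key_le_total {N : nat} : total (@key_le N).
Proof.
move=> [b1 v1] [b2 v2]; rewrite /key_le /=.
by case: b1; case: b2 => //=; apply: leq_total.
Qed.

Lemma key_le_trans {N : nat} : transitive (@key_le N).
Proof.
move=> [b2 v2] [b1 v1] [b3 v3]; rewrite /key_le /=.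
by case: b1; case: b2; case: b3 => //= h1 h2; apply: leq_trans h2 h1.
Qed.

Lemma key_le_anti {N : nat} : antisymmetric (@key_le N).
Proof.
move=> [b1 v1] [b2 v2]; rewrite /key_le /=.
by case: b1; case: b2 => //= /anti_leq e; congr pair; apply: val_inj.
Qed.

Section SortedKeys.
Variables (T : finType) (N : nat).
Local Notation key := (bool * 'I_N.+1)%type.
Implicit Types x y : config T N.

Definition config_key x u : key := (u \in x.2, x.1 u).
Definition config_keys x := [seq config_key x u | u <- enum T].
Definition sorted_keys x := sort key_le (config_keys x).

Lemma sorted_keys_act x s : sorted_keys (config_act x s) = sorted_keys x.
Proof.
apply/(perm_sortP key_le_total key_le_trans key_le_anti).
have keyE u : config_key (config_act x s) u = config_key x ((s^-1)%g u).
  by rewrite /config_key /= inE ffunE.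
rewrite /config_keys (eq_map keyE) map_comp; apply: perm_map.
apply: uniq_perm; first by rewrite map_inj_uniq ?enum_uniq //; apply: perm_inj.
  exact: enum_uniq.
by move=> u; rewrite mem_enum; apply/mapP; exists (s u); rewrite ?mem_enum ?permK.
Qed.

Lemma sorted_keys_orbit x y : sorted_keys x = sorted_keys y -> exists s, config_act x s = y.
Proof.
move: x y => [f S] [g S'] e; set x := (f, S); set y := (g, S').
set ex := sort (relpre (config_key x) key_le) (enum T).
set ey := sort (relpre (config_key y) key_le) (enum T).
have hx : map (config_key x) ex = sorted_keys x by rewrite /sorted_keys sort_map.
have hy : map (config_key y) ey = sorted_keys y by rewrite /sorted_keys sort_map.
have sz : size ex = size ey by rewrite !size_sort.
have memx u : u \in ex by rewrite mem_sort mem_enum.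
have ix u : (index u ex < size ex)%N by rewrite index_mem.
have uy : uniq ey by rewrite sort_uniq enum_uniq.
pose phi u := nth u ey (index u ex).
have phi_inj : injective phi.
  move=> u v; rewrite /phi (set_nth_default v u) -?sz // => /eqP.
  rewrite nth_uniq -?sz // => /eqP hi.
  by rewrite -(nth_index u (memx u)) hi (set_nth_default v) ?nth_index.
have hk u : config_key y (phi u) = config_key x u.
  rewrite /phi -(nth_map u (config_key y u)) -?sz // hy -e -hx (nth_map u) //.
  by rewrite nth_index.
exists (perm phi_inj); rewrite /config_act /=; congr pair.
  apply/ffunP => w; rewrite ffunE.
  have := congr1 snd (hk ((perm phi_inj)^-1 w)%g); rewrite /= => <-.
  by congr (g _); rewrite -[in RHS](permKV (perm phi_inj) w) permE.
apply/setP => w; rewrite inE.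
have := congr1 fst (hk ((perm phi_inj)^-1 w)%g); rewrite /= => <-.
by rewrite -[in RHS](permKV (perm phi_inj) w) permE.
Qed.

Lemma eq_orbit_sorted_keys x y :
  (orbit (config_action T N) [set: {perm T}] x == orbit (config_action T N) [set: {perm T}] y)
  = (sorted_keys x == sorted_keys y).
Proof.
apply/eqP/eqP => [e | /sorted_keys_orbit[s hs]].
  have : y \in orbit (config_action T N) [set: {perm T}] x by rewrite e orbit_refl.
  by case/orbitP => a _ /= <-; rewrite sorted_keys_act.
apply/orbit_eqP/orbitP; exists (s^-1)%g; first by rewrite inE.
by rewrite /= -hs config_actK.
Qed.

Lemma count_config_keys x : count fst (config_keys x) = #|x.2|.
Proof.
rewrite /config_keys count_map cardE /enum_mem size_filter count_filter.
by apply: eq_count => u; rewrite /= andbT.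
Qed.

Lemma sumn_config_keys x :
  sumn [seq val q.2 | q <- config_keys x] = (\sum_u nat_of_ord (x.1 u))%N.
Proof. by rewrite /config_keys -map_comp sumnE big_map big_enum. Qed.

Lemma sorted_key_le_split (s : seq key) :
  sorted key_le s -> s = filter fst s ++ filter (predC fst) s.
Proof.
elim: s => //= -[[] v] s IH hs /=; first by rewrite {1}(IH (path_sorted hs)).
have hall : all (predC fst) s.
  by apply: sub_all (order_path_min key_le_trans hs) => -[[] v'].
have -> : filter fst s = [::].
  by apply/eqP; rewrite -size_eq0 size_filter eqn0Ngt -has_count -all_predC.
by have /all_filterP -> := hall.
Qed.

End SortedKeys.

Lemma card_imset_eq_kernel (A Y1 Y2 : finType) (D : {set A}) (F : A -> Y1) (H : A -> Y2) :
  (forall x y, (F x == F y) = (H x == H y)) -> #|F @: D| = #|H @: D|.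
Proof.
move=> hFH; pose P := [set (F x, H x) | x in D].
have -> : F @: D = fst @: P by rewrite -imset_comp.
have -> : H @: D = snd @: P by rewrite -imset_comp.
rewrite !(@card_in_imset _ _ _ P) //
  => -[a1 b1] [a2 b2] /imsetP[x _ [-> ->]] /imsetP[y _ [-> ->]] /= e;
  have := hFH x y; rewrite e eqxx => h.
- by rewrite (eqP h).
- by rewrite (eqP (esym h)).
Qed.

Lemma sorted_gtn_uniq_geq (s : seq nat) : sorted gtn s = uniq s && sorted geq s.
Proof. by rewrite -(rev_sorted ltn) ltn_sorted_uniq_leq rev_uniq rev_sorted. Qed.

Lemma uniq_unmarked_values (T : finType) N (x : config T N) : inj_off x ->
  uniq [seq q.2 | q <- filter (predC fst) (config_keys x)].
Proof.
move=> /forallP hinj; rewrite /config_keys filter_map -map_comp map_inj_in_uniq.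
  exact/filter_uniq/enum_uniq.
move=> u v; rewrite !mem_filter /= => /andP[hu _] /andP[hv _] e.
by have /forallP/(_ v) := hinj u; rewrite hu hv e eqxx => /eqP.
Qed.

Section PairsOfPartitions.
Variables (n N m : nat).
Hypothesis hmn : (m <= n)%N.
Local Notation key := (bool * 'I_N.+1)%type.
Local Notation pair_t := (m.-tuple 'I_N.+1 * (n - m).-tuple 'I_N.+1)%type.
Implicit Types (x : config 'I_n N) (p : pair_t).

Definition pair_set := [set p : pair_t | [&& sorted geq (map val p.1),
  sorted gtn (map val p.2) & (sumn (map val p.1) + sumn (map val p.2) == N)%N]].

Definition pair_keys p : seq key := map (pair true) p.1 ++ map (pair false) p.2.

Lemma size_pair_keys p : size (pair_keys p) == #|'I_n|.
Proof. by rewrite /pair_keys size_cat !size_map !size_tuple subnKC // card_ord. Qed.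

Definition pair_keys_tuple p : #|'I_n|.-tuple key := Tuple (size_pair_keys p).

Lemma pair_keys_tuple_inj : injective pair_keys_tuple.
Proof.
move=> [a1 b1] [a2 b2] /(congr1 val) /eqP.
rewrite /= /pair_keys eqseq_cat ?size_map ?size_tuple // => /andP[/eqP e1 /eqP e2].
by congr pair; apply: val_inj; [apply: (inj_map _ e1) | apply: (inj_map _ e2)] => u v [].
Qed.

Lemma size_sorted_keys x : size (sorted_keys x) == #|'I_n|.
Proof. by rewrite size_sort size_map -cardE. Qed.

Definition sorted_keys_tuple x : #|'I_n|.-tuple key := Tuple (size_sorted_keys x).

Lemma sorted_key_le_pair b (L : seq 'I_N.+1) :
  sorted key_le (map (pair b) L) = sorted geq (map val L).
Proof. by rewrite !sorted_map; apply: eq_sorted => u v; rewrite /key_le /= eqxx. Qed.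

Lemma sorted_pair_keys p : p \in pair_set -> sorted key_le (pair_keys p).
Proof.
rewrite inE => /and3P[h1 h2 _].
rewrite (sorted_pairwise key_le_trans) pairwise_cat; apply/and3P; split.
- by apply/allrelP => a b /mapP[u _ ->] /mapP[v _ ->].
- by rewrite -(sorted_pairwise key_le_trans) sorted_key_le_pair.
- rewrite -(sorted_pairwise key_le_trans) sorted_key_le_pair.
  by apply: (sub_sorted _ h2) => u v /ltnW.
Qed.

Lemma sorted_keys_good x :
  x \in good_configs 'I_n N m -> sorted_keys_tuple x \in pair_keys_tuple @: pair_set.
Proof.
rewrite inE /shaped => /andP[/andP[/eqP hsum /eqP hcard] hinj].
set s := sorted_keys x.
have hs : sorted key_le s by apply/sort_sorted/key_le_total.
have hp : perm_eq s (config_keys x) by rewrite perm_sort.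
set L1 := map snd (filter fst s); set L2 := map snd (filter (predC fst) s).
have hL1 : map (pair true) L1 = filter fst s.
  by rewrite -map_comp; apply: map_id_in => -[[] v]; rewrite mem_filter.
have hL2 : map (pair false) L2 = filter (predC fst) s.
  by rewrite -map_comp; apply: map_id_in => -[[] v]; rewrite mem_filter.
have c1 : count fst s = m by rewrite (seq.permP hp) count_config_keys hcard.
have sz1 : size L1 == m by rewrite size_map size_filter c1.
have sz2 : size L2 == (n - m)%N.
  have : (m + count (predC fst) s = n)%N.
    by rewrite -c1 count_predC (eqP (size_sorted_keys x)) card_ord.
  by move=> <-; rewrite size_map size_filter addKn.
apply/imsetP; exists (Tuple sz1, Tuple sz2); last first.
  by apply: val_inj; rewrite /= /pair_keys /= hL1 hL2 -sorted_key_le_split.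
rewrite inE /=; apply/and3P; split.
- by rewrite -(sorted_key_le_pair true) hL1 sorted_filter //; apply: key_le_trans.
- rewrite sorted_gtn_uniq_geq -(sorted_key_le_pair false) hL2 sorted_filter ?andbT //;
    last exact: key_le_trans.
  rewrite map_inj_uniq; last exact: val_inj.
  by rewrite (perm_uniq (perm_map _ (perm_filter _ hp))) uniq_unmarked_values.
- rewrite /L1 /L2 -!map_comp -sumn_cat -map_cat.
  rewrite (perm_sumn (perm_map _ (permEl (perm_filterC fst s)))).
  by rewrite (perm_sumn (perm_map _ hp)); apply/eqP; rewrite -[RHS]hsum -sumn_config_keys.
Qed.

Definition pair_config p : config 'I_n N :=
  ([ffun i : 'I_n => nth ord0 ((p.1 : seq _) ++ p.2) i], [set i : 'I_n | (i < m)%N]).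

Lemma config_keys_pair_config p : config_keys (pair_config p) = pair_keys p.
Proof.
apply: (@eq_from_nth _ (true, ord0)) => [|i].
  by rewrite size_map size_enum_ord size_cat !size_map !size_tuple subnKC.
rewrite size_map size_enum_ord => hi; rewrite (nth_map (Ordinal hi)) ?size_enum_ord //.
have vi : nat_of_ord (nth (Ordinal hi) (enum 'I_n) i) = i by rewrite nth_enum_ord.
rewrite /config_key /= inE ffunE vi /pair_keys !nth_cat size_map !size_tuple.
case: ifP => him; first by rewrite (nth_map ord0) ?size_tuple.
by rewrite (nth_map ord0) ?size_tuple //; move/negbT: him; rewrite -leqNgt => him; lia.
Qed.

Lemma pair_config_good p : p \in pair_set -> pair_config p \in good_configs 'I_n N m.
Proof.
rewrite inE => /and3P[_ h2 /eqP h3].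
rewrite inE /shaped -sumn_config_keys -count_config_keys config_keys_pair_config.
apply/andP; split; first (apply/andP; split).
- by rewrite /pair_keys map_cat sumn_cat -!map_comp h3.
- rewrite /pair_keys count_cat !count_map (eq_count (a2 := predT)) // count_predT size_tuple.
  by rewrite (eq_count (a2 := pred0)) // count_pred0 addn0.
have up : uniq (p.2 : seq _).
  by apply: (@map_uniq _ _ val); rewrite sorted_gtn_uniq_geq in h2; case/andP: h2.
apply/forallP => u; apply/forallP => v; apply/implyP.
rewrite !inE -!leqNgt !ffunE /= => /and3P[hu hv e].
move: e; rewrite !nth_cat !size_tuple ltnNge hu ltnNge hv /= nth_uniq ?size_tuple //.
- by move=> /eqP e; apply/eqP/val_inj => /=; lia.
- by have := ltn_ord u; lia.
- by have := ltn_ord v; lia.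
Qed.

Lemma card_sorted_keys_good :
  #|sorted_keys_tuple @: good_configs 'I_n N m| = pair_count m (n - m) N.
Proof.
have -> : sorted_keys_tuple @: good_configs 'I_n N m = pair_keys_tuple @: pair_set.
  apply/setP => q; apply/imsetP/idP => [[x hx ->] | /imsetP[p hp ->]].
    exact: sorted_keys_good.
  exists (pair_config p); first exact: pair_config_good.
  apply: val_inj; rewrite /= /sorted_keys config_keys_pair_config sorted_sort //.
    exact: key_le_trans.
  exact: sorted_pair_keys.
by rewrite (card_imset _ pair_keys_tuple_inj).
Qed.

End PairsOfPartitions.

Lemma smoment_HE_pair_count n N m : (m <= n)%N ->
  smoment n (fun X => Hpoly N X * Epoly m X) = (pair_count m (n - m) N)%:R.
Proof.
move=> hmn; rewrite smoment_HE_card_orbits.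
rewrite (card_imset_eq_kernel _ (H := @sorted_keys_tuple n N)) ?card_sorted_keys_good //.
by move=> x y; rewrite eq_orbit_sorted_keys -val_eqE.
Qed.

Theorem proposition3p8 (a b j n : nat) (hj : (j <= b)%N) (hn : (b.+1 <= n)%N) :
  smoment n (fun X => Hpoly (a + 1 + j) X * Epoly (b - j) X)
  = (pair_count (b - j) (n - b + j) (a + 1 + j))%:R.
Proof.
rewrite smoment_HE_pair_count; last by lia.
by have -> : (n - (b - j) = n - b + j)%N by lia.
Qed.
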